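(* Let $V_\theta$ be a real vector space of dimension $2$ and let $M\subset V_\theta\times[0,1]$ be a dichotomous item response hypersurface with associated function $f:V_\theta\to[0,1]$. Then there exists a nonzero $v\in V_\theta$ such that $f$ is constant on the line $\mathbb{R}\cdot v=\{\lambda v:\lambda\in\mathbb{R}\}$.
   Context: A dichotomous item response hypersurface (IRHS) is a $D=\dim V_\theta$ dimensional smooth submanifold $M$ of $V_\theta\times[0,1]$ such that for any two vectors $v,w\in V_\theta$, the intersection of $(w+\mathbb{R}\cdot v)\times[0,1]$ with $M$ is the graph of a monotonic function $w+\mathbb{R}\cdot v\to[0,1]$, where $w+\mathbb{R}\cdot v=\{w+\lambda v:\lambda\in\mathbb{R}\}$. A function $g:w+\mathbb{R}\cdot v\to[0,1]$ is monotonic if either $g(w+\lambda v)\le g(w+\mu v)$ for all $\lambda\le\mu$, or $g(w+\lambda v)\ge g(w+\mu v)$ for all $\lambda\le\mu$. Taking $v=0$ shows $M$ is the graph of a function $f:V_\theta\to[0,1]$, the associated function. *)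

From HB Require Import structures.
From mathcomp Require Import all_boot all_order all_algebra.
From mathcomp Require Import all_classical all_reals all_analysis.
Set Implicit Arguments. Unset Strict Implicit. Unset Printing Implicit Defensive.
Import Order.TTheory GRing.Theory Num.Theory.
Import numFieldNormedType.Exports.
Local Open Scope classical_set_scope.
Local Open Scope ring_scope.

Definition Vth (R : realType) := 'rV[R]_2.

(* Ambient space V_theta x R, in which V_theta x [0,1] sits. *)
Definition Amb (R : realType) := ('rV[R]_2 * R)%type.

Definition iter_dderiv (R : realType) (F : Amb R -> R) (ws : seq (Amb R))
  : Amb R -> R :=
  foldr (fun w g => fun x => derive g x w) F ws.

Definition smooth_on (R : realType) (U : set (Amb R)) (F : Amb R -> R) : Prop :=
  forall (ws : seq (Amb R)) (x : Amb R), U x ->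
    {for x, continuous (iter_dderiv F ws)} /\
    forall w : Amb R, derivable (iter_dderiv F ws) x w.

(* M is a smooth embedded submanifold of dimension D = 2 (i.e. a smooth
   hypersurface) of V_theta x R: locally the regular zero set of a smooth
   real function. *)
Definition smooth_hypersurface (R : realType) (M : set (Amb R)) : Prop :=
  forall p, M p ->
    exists (U : set (Amb R)) (F : Amb R -> R),
      [/\ open U, U p, smooth_on U F,
          (forall x, U x -> (M x <-> F x = 0)) &
          (forall x, U x -> M x -> exists w : Amb R, derive F x w != 0)].

Definition line (R : realType) (w v : Vth R) : set (Vth R) :=
  [set x | exists lam : R, x = w + lam *: v].

Definition IRHS (R : realType) (M : set (Amb R)) : Prop :=
  [/\ (forall x y, M (x, y) -> 0 <= y <= 1),
      smooth_hypersurface M &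
      forall v w : Vth R,
        exists g : Vth R -> R,
          (forall x, line w v x -> forall y, M (x, y) <-> y = g x) /\
          ((forall lam mu : R, lam <= mu -> g (w + lam *: v) <= g (w + mu *: v))
           \/ (forall lam mu : R, lam <= mu -> g (w + mu *: v) <= g (w + lam *: v)))].

From HB Require Import structures.
From mathcomp Require Import all_boot all_order all_algebra.
From mathcomp Require Import all_classical all_reals all_analysis.
From mathcomp Require Import lra.
Import Order.TTheory GRing.Theory Num.Theory.
Import numFieldNormedType.Exports.
Local Open Scope classical_set_scope.
Local Open Scope ring_scope.

(* Near a point p = (x0, f x0) the surface M is the zero set of a function F with
   a nonzero directional derivative at p, so F takes both signs arbitrarily close to
   p.  If F (x0, f x0 - e) and F (x0, f x0 + e) had the same sign, a point q near p
   where F has the opposite sign would make F vanish twice on the vertical line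
   through q, although M is a graph.  These opposite signs persist for x near x0 and
   trap f x between f x0 - e and f x0 + e, so f is continuous.

   Along every line through 0 the function f is monotone.  The nonzero directions v
   along which f strictly increases somewhere form an open set, and v |-> -v maps it
   onto the directions along which f strictly decreases.  If f were constant along
   no line, these two disjoint open sets would cover the punctured plane, which is
   connected (via a path from a vector to its opposite), and v |-> -v would exchange
   them: a contradiction. *)

Lemma mulr_le0_min_max {R : realDomainType} (a b : R) :
  a * b <= 0 -> Num.min a b <= 0 <= Num.max a b.
Proof.
move=> ab; rewrite ge_min le_max; apply/andP; split; apply/orP.
- by case: (lerP a 0) => ha; [left | right; nra].
- by case: (lerP 0 a) => ha; [left | right; nra].
Qed.

Lemma derive_neq0_sign_change {R : realType} {V : normedModType R} (F : V -> R)
    (p w : V) (c : R) :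
  F p = 0 -> derivable F p w -> c * derive F p w != 0 ->
  ~ (\forall q \near p, 0 <= c * F q).
Proof.
move=> Fp dF cD0 near_ge0.
set D := derive F p w in cD0.
have slope : (fun h : R => h^-1 * F (p + h *: w)) @ 0^' --> D.
  apply: cvg_trans dF; apply: near_eq_cvg; apply: nearW => h.
  by rewrite /= Fp subr0 addrC.
have slope_sign : \forall h \near 0^', 0 < c * D * (c * (h^-1 * F (p + h *: w))).
  apply: (cvgr_gt (c * D * (c * D))); last by rewrite -expr2 lt0r sqr_ge0 expf_neq0.
  exact: (cvgMl_tmp (a := c * D) (cvgMl_tmp (a := c) slope)).
have line_sign : \forall h \near (0 : R), 0 <= c * F (p + h *: w).
  have line_cont : forall t : R, {for t, continuous (fun h : R => p + h *: w)}.
    by move=> t; apply: cvgD; [exact: cvg_cst | exact: (cvgZr_tmp cvg_id)].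
  by move: (line_cont 0); rewrite /prop_for /continuous_at scale0r addr0 => /(_ _ near_ge0).
have /nbhs_normP[e /= e0 he] : \forall h \near (0 : R), h != 0 ->
    0 < c * D * (c * (h^-1 * F (p + h *: w))) /\ 0 <= c * F (p + h *: w).
  exact: filterI slope_sign (nbhs_dnbhs line_sign).
have e2 : 0 < e / 2 by rewrite divr_gt0.
have at_half h : `|h| = e / 2 ->
    0 < h^-1 * (c * D * (c * F (p + h *: w))) /\ 0 <= c * F (p + h *: w).
  move=> hh; have hb : ball_ Num.norm 0 e h by rewrite /ball_ /= sub0r normrN hh; lra.
  have [slope_h sign_h] := he h hb ltac:(by rewrite -normr_gt0 hh).
  by split; rewrite // mulrCA [h^-1 * (c * _)]mulrCA.
have [pos_h pos_u] := at_half (e / 2) (gtr0_norm e2).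
have [pos_mh pos_v] := at_half (- (e / 2)) ltac:(by rewrite normrN gtr0_norm).
have inv_e2 : 0 < (e / 2)^-1 by rewrite invr_gt0.
move: pos_h pos_mh; rewrite invrN mulNr oppr_gt0 pmulr_rgt0 // pmulr_rlt0 //.
by case: (lerP (c * D) 0) => ? ? ?; nra.
Qed.

Section GraphContinuity.
Variables (R : realType) (E : normedModType R) (f : E -> R) (F : E * R -> R).
Variables (x0 : E) (r : R).
Hypothesis r_gt0 : 0 < r.
Hypothesis F_cont : forall x y, `|x0 - x| < r -> `|f x0 - y| < r ->
  {for (x, y), continuous F}.
Hypothesis F_zero : forall x y, `|x0 - x| < r -> `|f x0 - y| < r ->
  (F (x, y) = 0 <-> y = f x).

Lemma graph_between x a b : `|x0 - x| < r -> f x0 - r < a -> a <= b -> b < f x0 + r ->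
  F (x, a) * F (x, b) <= 0 -> a <= f x <= b.
Proof.
move=> xr ar ab br Fab.
have near_y y : a <= y <= b -> `|f x0 - y| < r by rewrite ltr_distlC => /andP[? ?]; lra.
have F_cont_y : {within `[a, b], continuous (fun y => F (x, y))}.
  apply: continuous_in_subspaceT => y; rewrite inE /= in_itv /= => /near_y yr.
  have pair_cont : {for y, continuous (fun y' : R => (x, y'))}.
    by apply: (@cvg_pair _ _ _ _ (nbhs x) (nbhs y)); [exact: cvg_cst | exact: cvg_id].
  exact: (continuous_comp pair_cont (F_cont _ _ xr yr)).
have [|y] := IVT (v := 0) ab F_cont_y; first exact: mulr_le0_min_max.
by rewrite in_itv /= => yab /(F_zero _ _ xr (near_y y yab)) <-.
Qed.

Lemma slice_continuous y : `|f x0 - y| < r -> {for x0, continuous (fun x => F (x, y))}.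
Proof.
move=> yr; have x0r : `|x0 - x0| < r by rewrite subrr normr0.
apply: (continuous_comp _ (F_cont _ _ x0r yr)).
by apply: (@cvg_pair _ _ _ _ (nbhs x0) (nbhs y)); [exact: cvg_id | exact: cvg_cst].
Qed.

Lemma near_box e : 0 < e ->
  \forall q \near (x0, f x0), `|x0 - q.1| < e /\ `|f x0 - q.2| < e.
Proof.
move=> e0; apply/nbhs_normP; exists e => // -[x y].
by rewrite /ball_ /= -[_ - _]/(x0 - x, f x0 - y) prod_normE gt_max => /andP.
Qed.

Lemma graph_zero_between x a y b : `|x0 - x| < r -> `|f x0 - y| < r ->
  f x0 - r < a -> a <= y <= b -> b < f x0 + r ->
  F (x, a) * F (x, y) <= 0 -> F (x, y) * F (x, b) <= 0 -> F (x, y) = 0.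
Proof.
move=> xr yr ar /andP[ay yb] br Fay Fyb.
have /andP[_ fy] := graph_between _ _ _ xr ar ay (le_lt_trans yb br) Fay.
have /andP[yf _] := graph_between _ _ _ xr (lt_le_trans ar ay) yb br Fyb.
by apply/(F_zero _ _ xr yr)/eqP; rewrite eq_le yf fy.
Qed.

Lemma graph_sign_change w e : 0 < e < r ->
  derivable F (x0, f x0) w -> derive F (x0, f x0) w != 0 ->
  F (x0, f x0 - e) * F (x0, f x0 + e) < 0.
Proof.
move=> /andP[e0 er] dF DF; set a := f x0 - e; set b := f x0 + e.
have x0r : `|x0 - x0| < r by rewrite subrr normr0.
have ar : `|f x0 - a| < r by rewrite /a opprB addrC subrK gtr0_norm.
have br : `|f x0 - b| < r by rewrite /b opprD addNKr normrN gtr0_norm.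
have y0r : `|f x0 - f x0| < r by rewrite subrr normr0.
have Fp : F (x0, f x0) = 0 by apply/(F_zero _ _ x0r y0r).
have Fa : F (x0, a) != 0 by apply/eqP => /(F_zero _ _ x0r ar); rewrite /a; lra.
have Fb : F (x0, b) != 0 by apply/eqP => /(F_zero _ _ x0r br); rewrite /b; lra.
rewrite ltNge; apply/negP => Fab_ge0; set c := F (x0, b) in Fb Fab_ge0.
apply: (derive_neq0_sign_change _ _ _ c Fp dF); first by rewrite mulf_neq0.
have near_sign y : `|f x0 - y| < r -> 0 < c * F (x0, y) ->
    \forall q \near (x0, f x0), 0 < c * F (q.1, y).
  move=> yr cFy; have near_x0 : \forall x \near x0, 0 < c * F (x, y).
    exact: cvgr_gt _ (cvgMl_tmp (slice_continuous _ yr)) _ cFy.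
  exact: cvg_fst near_x0.
have near_a : \forall q \near (x0, f x0), 0 < c * F (q.1, a).
  by apply: near_sign => //; rewrite lt0r mulf_neq0 // mulrC.
have near_b : \forall q \near (x0, f x0), 0 < c * F (q.1, b).
  by apply: near_sign => //; rewrite -expr2 lt0r sqr_ge0 expf_neq0.
have re : 0 < Num.min r e by rewrite lt_min r_gt0 e0.
move: (near_box _ re) near_a near_b; apply: filterS3 => -[x y] /=.
rewrite !lt_min => -[/andP[xr _] /andP[yr]] + ca cb.
rewrite ltr_distlC => /andP[ay yb]; rewrite leNgt; apply/negP => cF_lt0.
have opp u v : 0 < c * u -> c * v < 0 -> u * v <= 0.
  by move=> cu cv; case: (ltgtP c 0) => c0; nra.
have ra : f x0 - r < a by rewrite /a ltrD2l ltrN2.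
have ayb : a <= y <= b by rewrite !ltW.
have br' : b < f x0 + r by rewrite /b ltrD2l.
have Fyb : F (x, y) * F (x, b) <= 0 by rewrite mulrC; exact: opp cb cF_lt0.
have Fxy0 := graph_zero_between _ _ _ _ xr yr ra ayb br' (opp _ _ ca cF_lt0) Fyb.
by move: cF_lt0; rewrite Fxy0 mulr0 ltxx.
Qed.

Lemma graph_continuous w : derivable F (x0, f x0) w -> derive F (x0, f x0) w != 0 ->
  {for x0, continuous f}.
Proof.
move=> dF DF; apply/cvgrPdist_le => e e0.
set d := Num.min e (r / 2).
have d0 : 0 < d by rewrite /d lt_min e0 divr_gt0.
have dr : d < r by rewrite /d gt_min ltr_pdivrMr // ltr_pMr // ltr1n orbT.
have de : d <= e by rewrite /d ge_min lexx.
have ar : `|f x0 - (f x0 - d)| < r by rewrite opprB addrC subrK gtr0_norm.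
have br : `|f x0 - (f x0 + d)| < r by rewrite opprD addNKr normrN gtr0_norm.
have sgn := graph_sign_change w d ltac:(by rewrite d0 dr) dF DF.
have near_neg : \forall x \near x0, F (x, f x0 - d) * F (x, f x0 + d) < 0.
  exact: cvgr_lt _ (cvgM (slice_continuous _ ar) (slice_continuous _ br)) _ sgn.
have near_x : \forall x \near x0, `|x0 - x| < r by apply/nbhs_normP; exists r.
apply: filterS2 near_neg near_x => x neg xr.
have lo_r : f x0 - r < f x0 - d by rewrite ltrD2l ltrN2.
have hi_r : f x0 + d < f x0 + r by rewrite ltrD2l.
have le_d : f x0 - d <= f x0 + d by rewrite lerD2l ge0_cp // ltW.
have /andP[lo hi] := graph_between _ _ _ xr lo_r le_d hi_r (ltW neg).
rewrite ler_distlC; apply/andP; split.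
- by apply: le_trans lo; rewrite lerD2l lerN2.
- by apply: le_trans hi _; rewrite lerD2l.
Qed.

End GraphContinuity.

Lemma IRHS_continuous {R : realType} {M : set (Amb R)} {f : Vth R -> R} :
  IRHS M -> (forall x y, M (x, y) <-> y = f x) -> continuous f.
Proof.
case=> _ smoothM _ hf x0.
have Mp : M (x0, f x0) by rewrite hf.
have [U [F [oU Up smoothF MU regular]]] := smoothM _ Mp.
have [w Dw] := regular _ Up Mp.
have /nbhs_normP[r r0 rU] : \forall q \near (x0, f x0), U q.
  by move: oU; rewrite openE => /(_ _ Up).
have box x y : `|x0 - x| < r -> `|f x0 - y| < r -> U (x, y).
  move=> xr yr; apply: rU.
  by rewrite /ball_ /= -[_ - _]/(x0 - x, f x0 - y) prod_normE gt_max xr yr.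
apply: (graph_continuous _ _ f F x0 r r0 _ _ w ((smoothF [::] _ Up).2 w) Dw).
- by move=> x y xr yr; exact: (smoothF [::] _ (box _ _ xr yr)).1.
- move=> x y xr yr; apply: iff_trans (hf x y).
  exact: iff_sym (MU _ (box _ _ xr yr)).
Qed.

Lemma IRHS_monotone_line {R : realType} {M : set (Amb R)} {f : Vth R -> R} :
  IRHS M -> (forall x y, M (x, y) <-> y = f x) -> forall w v : Vth R,
  (forall l m : R, l <= m -> f (w + l *: v) <= f (w + m *: v)) \/
  (forall l m : R, l <= m -> f (w + m *: v) <= f (w + l *: v)).
Proof.
case=> _ _ lines hf w v; have [g [Mg g_mono]] := lines v w.
have fg l : f (w + l *: v) = g (w + l *: v).
  by apply: (Mg _ (ex_intro _ l erefl) _).1; rewrite hf.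
by case: g_mono => mono; [left | right] => l m lm; rewrite !fg; exact: mono.
Qed.

Definition rises_along {R : realDomainType} {V : lmodType R} (f : V -> R) (v : V) :=
  exists t s : R, t < s /\ f (t *: v) < f (s *: v).

Lemma rises_alongN {R : realDomainType} {V : lmodType R} (f : V -> R) (v : V) :
  rises_along f (- v) <-> exists t s : R, t < s /\ f (s *: v) < f (t *: v).
Proof.
split=> -[t [s [ts fts]]]; exists (- s), (- t);
  by rewrite ltrN2 !scalerN !scaleNr ?opprK in fts *.
Qed.

Lemma monotone_not_rises_both {R : realDomainType} {V : lmodType R} (f : V -> R) v :
  (forall l m : R, l <= m -> f (l *: v) <= f (m *: v)) \/
  (forall l m : R, l <= m -> f (m *: v) <= f (l *: v)) ->
  ~ (rises_along f v /\ rises_along f (- v)).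
Proof.
move=> mono [[t [s [ts up]]] /rises_alongN[t' [s' [ts' down]]]].
case: mono => [incr | decr].
- by have := incr _ _ (ltW ts'); rewrite leNgt down.
- by have := decr _ _ (ltW ts); rewrite leNgt up.
Qed.

Lemma rises_along_of_nonconstant {R : realDomainType} {V : lmodType R} (f : V -> R) v :
  ~ (forall lam mu : R, f (lam *: v) = f (mu *: v)) ->
  rises_along f v \/ rises_along f (- v).
Proof.
move=> /existsNP[l /existsNP[m flm]]; rewrite rises_alongN.
wlog lm : l m flm / l < m.
  move=> wlog_lm; case: (ltgtP l m) => [lm | ml | lm]; first exact: wlog_lm lm.
    exact: wlog_lm m l (fun e => flm (esym e)) ml.
  by rewrite lm in flm.
case: (ltgtP (f (l *: v)) (f (m *: v))) => [up | down | //].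
- by left; exists l, m.
- by right; exists l, m.
Qed.

Lemma open_rises_along {R : realType} {V : normedModType R} (f : V -> R) :
  continuous f -> open [set v | rises_along f v].
Proof.
move=> f_cont; rewrite openE => v [t [s [ts up]]].
have gap_cont : {for v, continuous (fun u => f (s *: u) - f (t *: u))}.
  have scale_cont a : {for v, continuous (fun u : V => a *: u)}.
    exact: cvgZl_tmp cvg_id.
  by apply: cvgB; exact: continuous_comp (scale_cont _) (f_cont _).
have near_gap : \forall u \near v, 0 < f (s *: u) - f (t *: u).
  by apply: cvgr_gt gap_cont _ _; rewrite subr_gt0.
by apply: filterS near_gap => u; rewrite subr_gt0 => ?; exists t, s.
Qed.

Lemma open_cover_segment_transfer {R : realType} {P Q : set R} :
  open P -> open Q -> (forall t, 0 <= t <= 1 -> P t \/ Q t) ->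
  (forall t, P t -> ~ Q t) -> P 0 -> P 1.
Proof.
move=> oP oQ cover disj P0.
have seg01 t : `[0, 1]%classic t = (0 <= t <= 1) by rewrite /= in_itv.
suff : (`[0, 1] `&` P)%classic 1 by case.
have -> : (`[0, 1] `&` P)%classic = `[0, 1]%classic.
  apply: segment_connected.
  - by exists 0; split; rewrite // seg01 lexx ler01.
  - by exists P.
  exists (~` Q); first exact: open_closedC.
  apply/seteqP; split=> t [t01 Pt]; split=> //; first exact: disj.
  by move: t01; rewrite seg01 => /cover[].
by rewrite seg01 lexx ler01.
Qed.

Definition antipodal_path {R : realType} (t : R) : 'rV[R]_2 :=
  (1 - 2 * t) *: delta_mx 0 0 + (t * (1 - t)) *: delta_mx 0 ord_max.

Lemma antipodal_path_continuous {R : realType} : continuous (@antipodal_path R).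
Proof.
move=> t; apply: cvgD; apply: cvgZr_tmp.
- by apply: cvgB; [exact: cvg_cst | apply: cvgMl_tmp; exact: cvg_id].
- by apply: cvgM; [exact: cvg_id | apply: cvgB; [exact: cvg_cst | exact: cvg_id]].
Qed.

Lemma antipodal_path_neq0 {R : realType} (t : R) : antipodal_path t != 0.
Proof.
apply/eqP => /rowP path0; move: (path0 0) (path0 ord_max).
rewrite !mxE /= !mulr1 !mulr0 addr0 add0r => e0 e1.
nra.
Qed.

Lemma antipodal_path1 {R : realType} : @antipodal_path R 1 = - antipodal_path 0.
Proof.
rewrite /antipodal_path !(mulr0, mulr1, mul0r, subrr, subr0, scale0r, addr0).
have -> : 1 - 2 = -1 :> R by lra.
by rewrite scaleN1r scale1r.
Qed.

Section NoConstantDirection.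
Variables (R : realType) (f : 'rV[R]_2 -> R).
Hypothesis f_cont : continuous f.
Hypothesis f_mono : forall v : 'rV[R]_2,
  (forall l m : R, l <= m -> f (l *: v) <= f (m *: v)) \/
  (forall l m : R, l <= m -> f (m *: v) <= f (l *: v)).
Hypothesis f_nonconst : forall v : 'rV[R]_2, v != 0 ->
  ~ (forall lam mu : R, f (lam *: v) = f (mu *: v)).

Let P := antipodal_path @^-1` [set v | rises_along f v].
Let Q := (fun t => - antipodal_path t) @^-1` [set v | rises_along f v].

Let open_P : open P.
Proof.
by apply: open_comp; [move=> t _; exact: antipodal_path_continuous | exact: open_rises_along].
Qed.

Let open_Q : open Q.
Proof.
apply: open_comp; last exact: open_rises_along.
by move=> t _; exact: cvgN (antipodal_path_continuous t).
Qed.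

Let P_or_Q t : P t \/ Q t.
Proof. exact/rises_along_of_nonconstant/f_nonconst/antipodal_path_neq0. Qed.

Let P_not_Q t : P t -> ~ Q t.
Proof. by move=> Pt Qt; exact: monotone_not_rises_both (f_mono _) (conj Pt Qt). Qed.

Lemma no_constant_direction_absurd : False.
Proof.
have P1Q0 : P 1 -> Q 0 by rewrite /P /Q /= antipodal_path1.
have Q1P0 : Q 1 -> P 0 by rewrite /P /Q /= antipodal_path1 opprK.
case: (P_or_Q 0) => [P0 | Q0].
- have P1 := open_cover_segment_transfer open_P open_Q (fun t _ => P_or_Q t) P_not_Q P0.
  exact: P_not_Q P0 (P1Q0 P1).
- have Q_or_P t : 0 <= t <= 1 -> Q t \/ P t by rewrite or_comm.
  have Q_not_P t : Q t -> ~ P t by move=> Qt Pt; exact: P_not_Q Pt Qt.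
  have Q1 := open_cover_segment_transfer open_Q open_P Q_or_P Q_not_P Q0.
  exact: P_not_Q (Q1P0 Q1) Q0.
Qed.

End NoConstantDirection.

Theorem lemma1 (R : realType) (M : set (Amb R)) (f : Vth R -> R)
  (hM : IRHS M) (hf : forall x y, M (x, y) <-> y = f x) :
  exists v : Vth R, v != 0 /\ forall lam mu : R, f (lam *: v) = f (mu *: v).
Proof.
apply: contrapT => no_const.
apply: (no_constant_direction_absurd _ _ (IRHS_continuous hM hf)) => [v | v v0 const].
- have [mono | mono] := IRHS_monotone_line hM hf 0 v; [left | right] => l m lm;
    by have := mono l m lm; rewrite !add0r.
- by apply: no_const; exists v.
Qed.
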